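(* For every nonnegative integer $n$, $$\sum_{k=0}^{\infty}(-1)^k(4k+1)\,\frac{(-n)_k^2\,(\tfrac12)_k}{k!\,(n+\tfrac32)_k^2}=\left(\frac14\right)^n\frac{(\tfrac32)_n^2}{(\tfrac54)_n(\tfrac34)_n}.$$ (The sum is finite, since $(-n)_k=0$ for $k>n$.)
   Context: $(a)_j=\Gamma(a+j)/\Gamma(a)=a(a+1)\cdots(a+j-1)$ denotes the rising factorial (Pochhammer symbol), with $(a)_0=1$. *)

From HB Require Import structures.
From mathcomp Require Import all_boot all_order all_algebra.
Set Implicit Arguments. Unset Strict Implicit. Unset Printing Implicit Defensive.
Import Order.TTheory GRing.Theory Num.Theory.
Local Open Scope ring_scope.

Definition poch {R : pzRingType} (a : R) (j : nat) : R :=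
  \prod_(i < j) (a + i%:R).

From HB Require Import structures.
From mathcomp Require Import all_boot all_order all_algebra.
From mathcomp Require Import ring lra.
Import Order.TTheory GRing.Theory Num.Theory.
Local Open Scope ring_scope.

(* Proof by creative telescoping (Zeilberger's method).  Write
     F n k = (-1)^k (4k+1) (-n)_k^2 (1/2)_k / (k! (n+3/2)_k^2)
   for the summand ('term') and S n = (1/4)^n (3/2)_n^2 / ((5/4)_n (3/4)_n)
   for the right-hand side ('closed_form').  With the ratio
   c n = S (n+1) / S n ('ratio') and an explicit rational certificate
   G n k ('cert', with G n 0 = 0 and G n (n+2) = 0) one has
     F (n+1) k = c n * F n k + (G n (k+1) - G n k),
   a rational-function identity checked by 'field' after expressing every
   Pochhammer symbol through those with index k-1.  Summing over k <= n+1
   and telescoping shows that \sum_(k <= n) F n k satisfies the same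
   first-order recurrence as S n, with the same initial value, so the two
   agree; terms with k > n vanish since (-n)_k = 0.  The identity holds in
   every real field; the theorem is its instance over the rationals. *)

Lemma poch0 {R : pzRingType} (a : R) : poch a 0 = 1.
Proof. by rewrite /poch big_ord0. Qed.

Lemma pochS {R : pzRingType} (a : R) (j : nat) : poch a j.+1 = poch a j * (a + j%:R).
Proof. by rewrite /poch big_ord_recr. Qed.

Lemma pochSl {R : pzRingType} (a : R) (j : nat) : poch a j.+1 = a * poch (a + 1) j.
Proof.
rewrite /poch big_ord_recl /= addr0; congr (_ * _).
by apply: eq_bigr => i _; rewrite mulrS addrA.
Qed.

(* (-n)_k = 0 as soon as k > n: the factor with index n is -n + n = 0. *)
Lemma poch_neg_nat {R : pzRingType} (n k : nat) : (n < k)%N -> poch (- n%:R : R) k = 0.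
Proof.
elim: k => [|k IHk] //; rewrite ltnS leq_eqVlt => /predU1P[<- | ltnk].
  by rewrite pochS addNr mulr0.
by rewrite pochS IHk // mul0r.
Qed.

Lemma poch_gt0 {R : numDomainType} (a : R) (j : nat) : 0 < a -> 0 < poch a j.
Proof. by move=> a_gt0; apply: prodr_gt0 => i _; apply: ltr_wpDr. Qed.

Section CreativeTelescoping.
Variable R : realFieldType.

Definition term (n k : nat) : R :=
  (-1) ^+ k * (4 * k%:R + 1) *
  (poch (- n%:R) k ^+ 2 * poch (1 / 2) k / (k`!%:R * poch (n%:R + 3 / 2) k ^+ 2)).

Definition closed_form (n : nat) : R :=
  (1 / 4) ^+ n * (poch (3 / 2) n ^+ 2 / (poch (5 / 4) n * poch (3 / 4) n)).

(* The ratio closed_form (n+1) / closed_form n. *)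
Definition ratio (n : nat) : R :=
  (2 * n%:R + 3) ^+ 2 / ((4 * n%:R + 5) * (4 * n%:R + 3)).

Definition cert (n k : nat) : R :=
  if k is j.+1 then
    ratio n * ((-1) ^+ k * poch (- n%:R) j ^+ 2 * poch (1 / 2) k *
               (2 * k%:R ^+ 2 - k%:R - 2 * (n%:R + 1) * (3 * n%:R + 2)) /
               (j`!%:R * poch (n%:R + 3 / 2) k ^+ 2))
  else 0.

Lemma term_vanish (n k : nat) : (n < k)%N -> term n k = 0.
Proof. by move=> ltnk; rewrite /term poch_neg_nat // expr0n /= !mul0r mulr0. Qed.

Lemma cert_vanish (n : nat) : cert n n.+2 = 0.
Proof. by rewrite /cert poch_neg_nat // expr0n /= !mulr0 !mul0r mulr0. Qed.

Lemma closed_formS (n : nat) : closed_form n.+1 = ratio n * closed_form n.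
Proof.
rewrite /closed_form /ratio !pochS exprS.
have := ler0n R n => n_ge0.
have P5_gt0 : 0 < poch (5 / 4 : R) n by apply: poch_gt0; lra.
have P3_gt0 : 0 < poch (3 / 4 : R) n by apply: poch_gt0; lra.
by field; rewrite !(mulf_neq0, lt0r_neq0) //; lra.
Qed.

(* For
   k = j+1 the Pochhammer symbols with parameter n+1 are first rewritten
   through those with parameter n, then all symbols are expanded down to
   index j and abstracted, leaving an identity of rational functions. *)
Lemma term_rec (n k : nat) :
  term n.+1 k = ratio n * term n k + (cert n k.+1 - cert n k).
Proof.
have := ler0n R n => n_ge0.
case: k => [|j].
  rewrite /term /cert /ratio !pochS !poch0 fact0.
  by field; rewrite !(mulf_neq0, lt0r_neq0) //; lra.
have := ler0n R j => j_ge0.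
have shift_neg : poch (- n.+1%:R : R) j.+1 = - n.+1%:R * poch (- n%:R) j.
  by rewrite pochSl; congr (_ * poch _ _); ring.
have shift_pos : poch (n.+1%:R + 3 / 2 : R) j.+1 =
                 poch (n%:R + 3 / 2) j.+2 / (n%:R + 3 / 2).
  rewrite (pochSl _ j.+1) mulrAC divff ?mul1r; last by apply: lt0r_neq0; lra.
  by congr poch; ring.
have P_gt0 : 0 < poch (n%:R + 3 / 2 : R) j by apply: poch_gt0; lra.
have F_gt0 : 0 < j`!%:R :> R by rewrite ltr0n fact_gt0.
rewrite /term /cert shift_neg shift_pos !pochS !factS !natrM /ratio !(exprS (-1)).
move: ((-1) ^+ j : R) (poch (- n%:R) j) (poch (1 / 2) j) P_gt0 F_gt0.
move: (poch (n%:R + 3 / 2) j) (j`!%:R : R) => P F P_gt0 F_gt0 sgn A H.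
by field; rewrite !(mulf_neq0, lt0r_neq0) //; lra.
Qed.

Lemma sum_term (n : nat) : \sum_(k < n.+1) term n k = closed_form n.
Proof.
elim: n => [|n IHn].
  rewrite big_ord_recr big_ord0 /term /closed_form /= !poch0 fact0.
  by field.
under eq_bigr do rewrite term_rec.
rewrite big_split /= -mulr_sumr big_ord_recr /= term_vanish // addr0 IHn.
rewrite -(big_mkord xpredT (fun k => cert n k.+1 - cert n k)) telescope_sumr //.
by rewrite cert_vanish /= subrr addr0 closed_formS.
Qed.

End CreativeTelescoping.

Theorem theorem1 (n m : nat) (hm : (n < m)%N) :
  \sum_(k < m)
      ((-1) ^+ k * (4 * k%:R + 1) *
       (poch (- n%:R) k ^+ 2 * poch (1 / 2) k /
        (k`!%:R * poch (n%:R + 3 / 2) k ^+ 2)) : rat)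
  = (1 / 4) ^+ n * (poch (3 / 2) n ^+ 2 / (poch (5 / 4) n * poch (3 / 4) n)).
Proof.
rewrite -(subnKC hm) big_split_ord /= [X in _ + X]big1 ?addr0.
  exact: (sum_term rat n).
by move=> i _; apply: term_vanish; rewrite /= leq_addr.
Qed.
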